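(* Assume $\sigma_1(x)=\tfrac12\sigma_1''(0)(x-a_1)(x-b_1)$ with $\sigma_1''(0)\ne0$ and real $a_1<0<b_1$, and that $(1-q^{-1})\tau'(0)=-\tfrac12\sigma_1''(0)$ and $(1-q^{-1})\tau(0)=\tfrac12\sigma_1''(0)(a_1+b_1)$, so that $\sigma_2(x)\equiv q\tfrac12\sigma_1''(0)a_1b_1$ is a nonzero constant. Put $a=a_1$, $b=b_1$ and $$\rho(x)=(qx/a,\,qx/b;q)_\infty.$$ Then there exist polynomials $P_n$, $n\in\mathbb{N}_0$, with $P_n$ of degree $n$ a solution of the q-EHT with $\lambda=\lambda_n$, and nonzero constants $d_n^2$, such that for all $m,n\in\mathbb{N}_0$ $$\int_a^bP_n(x)P_m(x)\rho(x)\,d_qx=d_n^2\delta_{mn},$$ i.e. orthogonality with respect to $\rho$ supported on $\{q^ka\}_{k\in\mathbb{N}_0}\cup\{q^kb\}_{k\in\mathbb{N}_0}$.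
   Context: Throughout $0<q<1$. For a function $y$ and $\zeta\in\{q,q^{-1}\}$, $D_\zeta y(x)=\frac{y(x)-y(\zeta x)}{(1-\zeta)x}$ for $x\ne0$ and $D_\zeta y(0)=y'(0)$; $[n]_q=\frac{1-q^n}{1-q}$. Let $\sigma_1$ be a real polynomial of degree at most two, $\tau(x)=\tau'(0)x+\tau(0)$ a real polynomial with $\tau'(0)\ne0$, and $\sigma_2(x):=q[\sigma_1(x)+(1-q^{-1})x\tau(x)]$. The q-EHT with parameter $n$ is $\sigma_1(x)D_{q^{-1}}D_qy(x)+\tau(x)D_qy(x)+\lambda_ny(x)=0$, $\lambda_n=-[n]_q\big(\tau'(0)+\tfrac12[n-1]_{q^{-1}}\sigma_1''(0)\big)$. $(\beta;q)_\infty=\prod_{k\ge0}(1-\beta q^k)$, $(\beta_1,\beta_2;q)_\infty=(\beta_1;q)_\infty(\beta_2;q)_\infty$. For $a<0<b$, $\int_a^b f(x)\,d_qx=(1-q)b\sum_{j\ge0}q^jf(q^jb)+(1-q)(-a)\sum_{j\ge0}q^jf(q^ja)$. *)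

From Stdlib Require Import Reals Lra.
From Coquelicot Require Import Coquelicot.
Open Scope R_scope.

Definition qD (zeta : R) (y : R -> R) (x : R) : R :=
  if Req_EM_T x 0 then Derive y 0
  else (y x - y (zeta * x)) / ((1 - zeta) * x).

Definition qnum (q : R) (n : Z) : R := (1 - powerRZ q n) / (1 - q).

Definition qpoch_inf (beta q : R) : R :=
  real (Lim_seq (fun N => prod_f_R0 (fun k => 1 - beta * q ^ k) N)).

(* Jackson q-integral from a < 0 to b > 0 *)
Definition qint (q a b : R) (f : R -> R) : R :=
  (1 - q) * b * Series (fun j => q ^ j * f (q ^ j * b))
  + (1 - q) * (- a) * Series (fun j => q ^ j * f (q ^ j * a)).

Definition qintegrable (q a b : R) (f : R -> R) : Prop :=
  ex_series (fun j => q ^ j * f (q ^ j * b)) /\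
  ex_series (fun j => q ^ j * f (q ^ j * a)).

Definition is_poly_deg (P : R -> R) (n : nat) : Prop :=
  exists c : nat -> R, c n <> 0 /\
    forall x, P x = sum_f_R0 (fun k => c k * x ^ k) n.

Definition lambda_n (q t1 s : R) (n : nat) : R :=
  - qnum q (Z.of_nat n) * (t1 + / 2 * qnum (/ q) (Z.of_nat n - 1) * s).

Definition solves_qEHT (q : R) (sigma1 tau : R -> R) (lam : R) (y : R -> R) : Prop :=
  forall x, sigma1 x * qD (/ q) (qD q y) x + tau x * qD q y x + lam * y x = 0.

From Stdlib Require Import Reals Lra Lia Classical.
From Coquelicot Require Import Coquelicot.
Open Scope R_scope.

(* The q-EHT operator L maps x^k to -lambda_k x^k plus terms of degree k-1 and k-2, and the
   lambda_k are pairwise distinct, so a triangular recursion on the coefficients produces a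
   monic polynomial solution P_n of every degree n.

   Orthogonality is a discrete Green identity.  The weight satisfies the Pearson relation
   rho(x/q) = (1 - x/a)(1 - x/b) rho(x), which makes (lambda_m - lambda_n) P_n P_m rho at a
   lattice point q^j y a telescoping difference W(q^j y) - W(q^(j+1) y) of the q-Wronskian
   W(x) = rho(x/q) (P_n(x/q) P_m(x) - P_n(x) P_m(x/q)) / x.  Since W vanishes at a and b and
   W(q^N a), W(q^N b) tend to the same limit, the two halves of the Jackson integral cancel.
   The squared norms are positive: rho >= 0 on the lattice, rho(q^j b) -> 1, and a nonzero
   polynomial cannot vanish at all the points q^j b. *)

Lemma pow_unit_interval (q : R) (n : nat) : 0 <= q <= 1 -> 0 <= q ^ n <= 1.
Proof. intro Hq; induction n; simpl; nra. Qed.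

Lemma exp_le_compat (x y : R) : x <= y -> exp x <= exp y.
Proof.
  intros [Hlt | ->]; [now left; apply exp_increasing | apply Rle_refl].
Qed.

Lemma is_lim_seq_geom_scal (q y : R) : Rabs q < 1 -> is_lim_seq (fun j => q ^ j * y) 0.
Proof.
  intro Hq. replace (Finite 0) with (Rbar_mult 0 y) by (simpl; f_equal; ring).
  apply is_lim_seq_scal_r, is_lim_seq_geom, Hq.
Qed.

Lemma Series_ge_term (u : nat -> R) (j : nat) :
  ex_series u -> (forall k, 0 <= u k) -> u j <= Series u.
Proof.
  intros Hex Hpos.
  assert (Hpartial : forall N, (j <= N)%nat -> u j <= sum_f_R0 u N).
  { intros N HjN; induction N as [|N IHN].
    - replace j with 0%nat by lia; apply Rle_refl.
    - destruct (Nat.eq_dec j (S N)) as [-> | Hne]; simpl.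
      + assert (0 <= sum_f_R0 u N) by (apply cond_pos_sum; exact Hpos). lra.
      + specialize (Hpos (S N)). assert (u j <= sum_f_R0 u N) by (apply IHN; lia). lra. }
  pose proof (Series_correct _ Hex) as Hs.
  apply is_series_Reals, is_lim_seq_Reals, (is_lim_seq_incr_n _ j) in Hs.
  exact (is_lim_seq_le (fun _ => u j) _ (u j) (Series u)
           (fun N => Hpartial (N + j)%nat ltac:(lia)) (is_lim_seq_const _) Hs).
Qed.

Lemma prod_f_R0_peel (f : nat -> R) (N : nat) :
  prod_f_R0 f (S N) = f 0%nat * prod_f_R0 (fun k => f (S k)) N.
Proof.
  induction N as [|N IH]; [simpl; ring|].
  change (prod_f_R0 f (S (S N))) with (prod_f_R0 f (S N) * f (S (S N))).
  rewrite IH; simpl; ring.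
Qed.

Lemma real_Rbar_mult (c : R) (l : Rbar) : real (Rbar_mult c l) = c * real l.
Proof.
  destruct l as [l| |]; simpl; try ring; unfold Rbar_mult, Rbar_mult';
  repeat (first [destruct Rle_dec | destruct Rle_lt_or_eq_dec]); simpl; ring.
Qed.

Lemma qpoch_inf_rec (t q : R) : qpoch_inf t q = (1 - t) * qpoch_inf (t * q) q.
Proof.
  unfold qpoch_inf.
  rewrite <- Lim_seq_incr_1,
    (Lim_seq_ext _ (fun N => (1 - t) * prod_f_R0 (fun k => 1 - t * q * q ^ k) N)).
  - now rewrite Lim_seq_scal_l, real_Rbar_mult.
  - intro N; rewrite prod_f_R0_peel; simpl.
    f_equal; [ring|]. induction N; simpl; [|rewrite IHN]; f_equal; ring.
Qed.

Section QPochhammer.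

Variable q : R.
Hypothesis hq : 0 < q < 1.

Definition qpoch_partial (t : R) (N : nat) : R := prod_f_R0 (fun k => 1 - t * q ^ k) N.

Lemma qpoch_partial_S (t : R) (N : nat) :
  qpoch_partial t (S N) = qpoch_partial t N * (1 - t * q ^ S N).
Proof. reflexivity. Qed.

Lemma qpoch_partial_dist (t : R) (N : nat) :
  Rabs (qpoch_partial t N - 1) <= exp (Rabs t * (1 - q ^ S N) / (1 - q)) - 1.
Proof.
  induction N as [|N IH].
  - unfold qpoch_partial; simpl.
    replace (1 - t * 1 - 1) with (- t) by ring; rewrite Rabs_Ropp.
    replace (Rabs t * (1 - q * 1) / (1 - q)) with (Rabs t) by (field; lra).
    pose proof (exp_ineq1_le (Rabs t)); lra.
  - rewrite qpoch_partial_S.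
    set (P := qpoch_partial t N) in *; set (u := t * q ^ S N).
    set (E := exp (Rabs t * (1 - q ^ S N) / (1 - q))) in *.
    assert (Hu : Rabs u = Rabs t * q ^ S N).
    { unfold u; rewrite Rabs_mult, (Rabs_right (q ^ S N)); [reflexivity|].
      apply Rle_ge, pow_le; lra. }
    assert (HE : exp (Rabs t * (1 - q ^ S (S N)) / (1 - q)) = E * exp (Rabs u)).
    { unfold E; rewrite <- exp_plus, Hu; f_equal.
      change (q ^ S (S N)) with (q * q ^ S N); field; lra. }
    rewrite HE.
    assert (E1 : 1 <= E).
    { unfold E; pose proof (pow_unit_interval q (S N) ltac:(lra)).
      pose proof (exp_ineq1_le (Rabs t * (1 - q ^ S N) / (1 - q))).
      assert (0 <= Rabs t * (1 - q ^ S N) / (1 - q)); [|lra].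
      apply Rmult_le_pos; [apply Rmult_le_pos; [apply Rabs_pos | lra]|].
      left; apply Rinv_0_lt_compat; lra. }
    (* |P (1 - u) - 1| <= |P - 1| (1 + |u|) + |u|, and 1 + |u| <= exp |u| *)
    pose proof (exp_ineq1_le (Rabs u)); pose proof (Rabs_pos u).
    assert (H1u : Rabs (1 - u) <= 1 + Rabs u).
    { unfold Rminus; eapply Rle_trans; [apply Rabs_triang|].
      rewrite Rabs_R1, Rabs_Ropp; lra. }
    assert (Rabs (P - 1) * Rabs (1 - u) <= (E - 1) * (1 + Rabs u))
      by (apply Rmult_le_compat; try apply Rabs_pos; lra).
    replace (P * (1 - u) - 1) with ((P - 1) * (1 - u) + - u) by ring.
    eapply Rle_trans; [apply Rabs_triang|]; rewrite Rabs_Ropp, Rabs_mult; nra.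
Qed.

Lemma qpoch_partial_dist_unif (t : R) (N : nat) :
  Rabs (qpoch_partial t N - 1) <= exp (Rabs t / (1 - q)) - 1.
Proof.
  eapply Rle_trans; [apply qpoch_partial_dist|].
  apply Rplus_le_compat_r, exp_le_compat, Rmult_le_compat_r;
    [left; apply Rinv_0_lt_compat; lra|].
  pose proof (pow_unit_interval q (S N) ltac:(lra)); pose proof (Rabs_pos t); nra.
Qed.

Lemma qpoch_inf_bounds (t : R) : t <= 1 ->
  0 <= qpoch_inf t q /\ Rabs (qpoch_inf t q - 1) <= exp (Rabs t / (1 - q)) - 1.
Proof.
  intro Ht.
  assert (Hfac : forall k, 0 <= 1 - t * q ^ k).
  { intro k; pose proof (pow_unit_interval q k ltac:(lra)); destruct (Rle_dec t 0); nra. }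
  assert (Hpos : forall N, 0 <= qpoch_partial t N)
    by (intro N; apply prod_SO_pos; auto).
  assert (Hbd : forall N, Rabs (qpoch_partial t N - 1) <= exp (Rabs t / (1 - q)) - 1)
    by apply qpoch_partial_dist_unif.
  assert (Hex : ex_finite_lim_seq (qpoch_partial t)).
  { destruct (Rle_dec t 0) as [Hn | Hp].
    - apply (ex_finite_lim_seq_incr _ (exp (Rabs t / (1 - q)))).
      + intro n; rewrite qpoch_partial_S.
        pose proof (pow_unit_interval q (S n) ltac:(lra)); pose proof (Hpos n).
        assert (0 <= - t * q ^ S n) by (apply Rmult_le_pos; lra); nra.
      + intro n; specialize (Hbd n); apply Rabs_le_between' in Hbd; lra.
    - apply (ex_finite_lim_seq_decr _ 0); [|exact Hpos].
      intro n; rewrite qpoch_partial_S.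
      pose proof (pow_unit_interval q (S n) ltac:(lra)); pose proof (Hpos n).
      assert (0 <= t * q ^ S n) by (apply Rmult_le_pos; lra); nra. }
  destruct Hex as [l Hl].
  replace (qpoch_inf t q) with l
    by (unfold qpoch_inf; fold (qpoch_partial t); now rewrite (is_lim_seq_unique _ _ Hl)).
  split.
  - apply (is_lim_seq_le (fun _ => 0) _ 0 l Hpos (is_lim_seq_const 0) Hl).
  - set (e := exp (Rabs t / (1 - q)) - 1) in Hbd |- *.
    apply Rabs_le_between'; split.
    + apply (is_lim_seq_le (fun _ => 1 - e) (qpoch_partial t) (1 - e) l); [|apply is_lim_seq_const | exact Hl].
      intro n; specialize (Hbd n); apply Rabs_le_between' in Hbd; lra.
    + apply (is_lim_seq_le (qpoch_partial t) (fun _ => 1 + e) l (1 + e)); [|exact Hl | apply is_lim_seq_const].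
      intro n; specialize (Hbd n); apply Rabs_le_between' in Hbd; lra.
Qed.

Lemma qpoch_inf_cvg_1 (u : nat -> R) :
  is_lim_seq u 0 -> is_lim_seq (fun N => qpoch_inf (u N) q) 1.
Proof.
  intro Hu.
  set (e := fun x => exp (Rabs x / (1 - q)) - 1).
  assert (He : is_lim_seq (fun N => e (u N)) 0).
  { replace (Finite 0) with (Finite (e 0))
      by (unfold e; rewrite Rabs_R0, Rdiv_0_l, exp_0; f_equal; ring).
    apply (is_lim_seq_continuous e); [|exact Hu].
    apply continuity_pt_minus; [|apply continuity_pt_const; intros ? ?; reflexivity].
    apply (continuity_pt_comp (fun x => Rabs x / (1 - q)) exp);
      [|apply derivable_continuous_pt, derivable_pt_exp].
    apply continuity_pt_mult; [apply Rcontinuity_abs|].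
    apply continuity_pt_const; intros ? ?; reflexivity. }
  apply (is_lim_seq_le_le_loc (fun N => 1 - e (u N)) _ (fun N => 1 + e (u N))).
  - apply is_lim_seq_spec in Hu; destruct (Hu (mkposreal 1 Rlt_0_1)) as [N HN].
    exists N; intros n Hn; specialize (HN n Hn); simpl in HN; rewrite Rminus_0_r in HN.
    destruct (qpoch_inf_bounds (u n)) as [_ Hb];
      [apply Rabs_lt_between in HN; lra|].
    apply Rabs_le_between' in Hb; unfold e; lra.
  - replace (Finite 1) with (Finite (1 - 0)) by (f_equal; ring).
    apply is_lim_seq_minus'; [apply is_lim_seq_const | exact He].
  - replace (Finite 1) with (Finite (1 + 0)) by (f_equal; ring).
    apply is_lim_seq_plus'; [apply is_lim_seq_const | exact He].
Qed.

End QPochhammer.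

Definition peval (c : nat -> R) (N : nat) (x : R) : R := sum_f_R0 (fun k => c k * x ^ k) N.

Lemma peval_S (c : nat -> R) (N : nat) (x : R) :
  peval c (S N) x = peval c N x + c (S N) * x ^ S N.
Proof. reflexivity. Qed.

Lemma peval_at_0 (c : nat -> R) (N : nat) : peval c N 0 = c 0%nat.
Proof. induction N as [|N IHN]; [unfold peval; simpl; ring|]. rewrite peval_S, IHN; simpl; ring. Qed.

Lemma peval_pad (c : nat -> R) (N : nat) (x : R) : c (S N) = 0 -> peval c (S N) x = peval c N x.
Proof. intro H; rewrite peval_S, H; ring. Qed.

Lemma peval_coef_0 (c : nat -> R) (N : nat) (x : R) :
  (forall k, (k <= N)%nat -> c k = 0) -> peval c N x = 0.
Proof.
  intro H; induction N as [|N IHN]; [unfold peval; simpl; rewrite H; [ring | lia]|].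
  rewrite peval_S, IHN, H; [ring | lia | intros; apply H; lia].
Qed.

Lemma peval_shift (c : nat -> R) (N : nat) (x : R) :
  peval c (S N) x = c 0%nat + x * peval (fun k => c (S k)) N x.
Proof.
  induction N as [|N IHN]; [unfold peval; simpl; ring|].
  rewrite peval_S, IHN, (peval_S (fun k => c (S k))); simpl; ring.
Qed.

Definition coef_mulX (c : nat -> R) (k : nat) : R := match k with 0%nat => 0 | S k => c k end.

Lemma peval_mulX (c : nat -> R) (N : nat) (x : R) :
  c N = 0 -> x * peval c N x = peval (coef_mulX c) N x.
Proof.
  intro HN.
  assert (Hx : forall M, x * peval c M x = peval (coef_mulX c) (S M) x).
  { induction M as [|M IHM]; [unfold peval; simpl; ring|].
    rewrite peval_S, (peval_S (coef_mulX c)), <- IHM; simpl; ring. }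
  destruct N as [|N]; [unfold peval; simpl; rewrite HN; ring|].
  rewrite Hx, peval_pad; [reflexivity | exact HN].
Qed.

Lemma peval_cvg_at_0 (c : nat -> R) (N : nat) (u : nat -> R) :
  is_lim_seq u 0 -> is_lim_seq (fun j => peval c N (u j)) (c 0%nat).
Proof.
  intro Hu; induction N as [|N IHN].
  - apply (is_lim_seq_ext (fun _ => c 0%nat)); [intro; unfold peval; simpl; ring|].
    apply is_lim_seq_const.
  - replace (Finite (c 0%nat)) with (Finite (c 0%nat + c (S N) * 0 ^ S N)) by (simpl; f_equal; ring).
    apply (is_lim_seq_ext (fun j => peval c N (u j) + c (S N) * u j ^ S N));
      [intro; symmetry; apply peval_S|].
    apply is_lim_seq_plus'; [exact IHN|].
    apply is_lim_seq_mult'; [apply is_lim_seq_const|].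
    apply (is_lim_seq_continuous (fun x => x ^ S N)); [|exact Hu].
    apply derivable_continuous_pt, derivable_pt_pow.
Qed.

Lemma peval_abs_le (c : nat -> R) (N : nat) (x B : R) :
  Rabs x <= B -> Rabs (peval c N x) <= peval (fun k => Rabs (c k)) N B.
Proof.
  intro HxB.
  assert (Hterm : forall k, Rabs (c k * x ^ k) <= Rabs (c k) * B ^ k).
  { intro k; rewrite Rabs_mult, <- RPow_abs.
    apply Rmult_le_compat_l, pow_incr; [apply Rabs_pos | split; [apply Rabs_pos | exact HxB]]. }
  induction N as [|N IHN]; [apply Hterm|].
  rewrite !peval_S; eapply Rle_trans; [apply Rabs_triang|]; apply Rplus_le_compat; auto.
Qed.

Lemma peval_eventually_zero (c : nat -> R) (N : nat) (q y : R) (J : nat) :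
  0 < q < 1 -> y <> 0 ->
  (forall j, (J <= j)%nat -> peval c N (q ^ j * y) = 0) -> c N = 0.
Proof.
  intros Hq Hy; revert c; induction N as [|N IHN]; intros c HZ.
  - specialize (HZ J (le_n _)); unfold peval in HZ; simpl in HZ; lra.
  - assert (H0 : c 0%nat = 0).
    { assert (Hl0 : is_lim_seq (fun j => peval c (S N) (q ^ j * y)) 0).
      { apply (is_lim_seq_ext_loc (fun _ => 0)); [|apply is_lim_seq_const].
        exists J; intros; symmetry; auto. }
      pose proof (peval_cvg_at_0 c (S N) _ (is_lim_seq_geom_scal q y ltac:(rewrite Rabs_right; lra)))
        as Hl.
      apply is_lim_seq_unique in Hl, Hl0; rewrite Hl in Hl0; now injection Hl0. }
    apply (IHN (fun k => c (S k))); intros j Hj.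
    specialize (HZ j Hj); rewrite peval_shift, H0, Rplus_0_l in HZ.
    apply Rmult_integral in HZ as [Hz | Hz]; [|exact Hz].
    exfalso; apply Rmult_integral in Hz as [Hz | Hz]; [|contradiction].
    revert Hz; apply pow_nonzero; lra.
Qed.

Definition qnat (z : R) (k : nat) : R := qnum z (Z.of_nat k).

Lemma qnat_pow (z : R) (k : nat) : qnat z k = (1 - z ^ k) / (1 - z).
Proof. unfold qnat, qnum; now rewrite <- pow_powerRZ. Qed.

Definition qderiv_coef (z : R) (c : nat -> R) (k : nat) : R := c (S k) * qnat z (S k).

Lemma qD_ext (z : R) (f g : R -> R) (x : R) : (forall t, f t = g t) -> qD z f x = qD z g x.
Proof.
  intro H; unfold qD; destruct (Req_EM_T x 0); [now apply Derive_ext | now rewrite !H].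
Qed.

Lemma qD_neq0 (z : R) (f : R -> R) (x : R) :
  x <> 0 -> qD z f x = (f x - f (z * x)) / ((1 - z) * x).
Proof. intro Hx; unfold qD; destruct (Req_EM_T x 0); [contradiction | reflexivity]. Qed.

Lemma qD2_neq0 (q : R) (f : R -> R) (x : R) : q <> 0 -> x <> 0 ->
  qD (/ q) (qD q f) x =
  ((f x - f (q * x)) / ((1 - q) * x) - (f (/ q * x) - f x) / ((1 - q) * (/ q * x)))
  / ((1 - / q) * x).
Proof.
  intros Hq Hx.
  assert (Hx' : / q * x <> 0) by (apply Rmult_integral_contrapositive; split; auto with real).
  rewrite !qD_neq0 by assumption.
  now replace (q * (/ q * x)) with x by (field; exact Hq).
Qed.

Lemma peval_qdiff (z : R) (c : nat -> R) (N : nat) (x : R) : z <> 1 ->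
  peval c (S N) x - peval c (S N) (z * x) = (1 - z) * x * peval (qderiv_coef z c) N x.
Proof.
  intro Hz; assert (Hz' : 1 - z <> 0) by lra.
  induction N as [|N IHN].
  { unfold peval, qderiv_coef; cbn [sum_f_R0]; rewrite qnat_pow; simpl; field; exact Hz'. }
  rewrite (peval_S (qderiv_coef z c)), Rmult_plus_distr_l, <- IHN, !(peval_S c (S N)).
  unfold qderiv_coef; rewrite qnat_pow, Rpow_mult_distr; simpl; field; exact Hz'.
Qed.

Lemma peval_derive_0 (c : nat -> R) (N : nat) : is_derive (peval c (S N)) 0 (c 1%nat).
Proof.
  induction N as [|N IHN].
  - apply (is_derive_ext (fun x => c 0%nat + c 1%nat * x)); [intro; unfold peval; simpl; ring|].
    auto_derive; [exact I | ring].
  - apply (is_derive_ext (fun x => peval c (S N) x + c (S (S N)) * x ^ S (S N)));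
      [intro; symmetry; apply peval_S|].
    replace (c 1%nat) with (c 1%nat + 0) by ring.
    apply (is_derive_plus (peval c (S N))); [exact IHN|].
    auto_derive; [exact I | simpl; ring].
Qed.

Lemma qD_peval (z : R) (c : nat -> R) (N : nat) (x : R) : z <> 1 ->
  qD z (peval c (S N)) x = peval (qderiv_coef z c) N x.
Proof.
  intro Hz; unfold qD; destruct (Req_EM_T x 0) as [-> | Hx].
  - rewrite (is_derive_unique _ _ _ (peval_derive_0 c N)), peval_at_0.
    unfold qderiv_coef; rewrite qnat_pow; simpl; field; lra.
  - rewrite peval_qdiff by exact Hz; field; split; [exact Hx | lra].
Qed.

Section Eigenvalues.

Variables (q s t1 : R).
Hypothesis hq : 0 < q < 1.
Hypothesis h1 : (1 - / q) * t1 = - (s / 2).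

Lemma inv_gt_1 : 1 < / q.
Proof. rewrite <- Rinv_1; apply Rinv_lt_contravar; lra. Qed.

Lemma lambda_n_pow (k : nat) :
  lambda_n q t1 s k = - (s / 2) * q ^ 2 / (1 - q) ^ 2 * ((/ q) ^ k - 1).
Proof.
  assert (Hq0 : q <> 0) by lra.
  pose proof inv_gt_1.
  assert (Ht : t1 = - (s / 2) / (1 - / q)) by (rewrite <- h1; field; split; [exact Hq0 | lra]).
  unfold lambda_n, qnum, Z.sub.
  rewrite powerRZ_add, <- !pow_powerRZ by (apply Rinv_neq_0_compat; exact Hq0).
  replace (powerRZ (/ q) (- (1))) with q by (simpl; now rewrite Rmult_1_r, Rinv_inv).
  rewrite Ht, pow_inv.
  assert (q ^ k <> 0) by (apply pow_nonzero; exact Hq0).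
  field; repeat split; auto; lra.
Qed.

Lemma lambda_n_inj (k m : nat) : s <> 0 -> lambda_n q t1 s k = lambda_n q t1 s m -> k = m.
Proof.
  intros hs H; rewrite !lambda_n_pow in H.
  assert (q ^ 2 <> 0) by (apply pow_nonzero; lra).
  assert ((1 - q) ^ 2 <> 0) by (apply pow_nonzero; lra).
  assert (- (s / 2) * q ^ 2 / (1 - q) ^ 2 <> 0)
    by (unfold Rdiv; apply Rmult_integral_contrapositive_currified;
        [apply Rmult_integral_contrapositive_currified; [intro; apply hs; lra | assumption]
        | now apply Rinv_neq_0_compat]).
  apply Rmult_eq_reg_l in H; [|assumption].
  pose proof inv_gt_1.
  destruct (Nat.lt_trichotomy k m) as [Hl | [He | Hl]]; [| exact He |];
    pose proof (Rlt_pow _ _ _ ltac:(eassumption) Hl); lra.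
Qed.

End Eigenvalues.

Section EigenPolynomials.

Variables (q s t1 t0 a b : R).
Hypothesis hq : 0 < q < 1.
Hypothesis hs : s <> 0.
Hypothesis h1 : (1 - / q) * t1 = - (s / 2).

Let lam := lambda_n q t1 s.

(* The operator L := sigma1 D_(1/q) D_q + tau D_q maps x^j to
   - lam j * x^j + qEHT_beta j * x^(j-1) + qEHT_gamma j * x^(j-2). *)
Definition qEHT_beta (j : nat) : R := qnat q j * (t0 - s / 2 * (a + b) * qnat (/ q) (pred j)).
Definition qEHT_gamma (j : nat) : R := s / 2 * a * b * qnat q j * qnat (/ q) (pred j).

Definition qEHT_image_coef (l : R) (c : nat -> R) (k : nat) : R :=
  c k * (l - lam k) + c (S k) * qEHT_beta (S k) + c (S (S k)) * qEHT_gamma (S (S k)).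

Lemma qEHT_coef (l : R) (c : nat -> R) (k : nat) :
  let c1 := qderiv_coef q c in let c2 := qderiv_coef (/ q) c1 in
  s / 2 * (coef_mulX (coef_mulX c2) k - (a + b) * coef_mulX c2 k + a * b * c2 k)
    + t1 * coef_mulX c1 k + t0 * c1 k + l * c k
  = qEHT_image_coef l c k.
Proof.
  assert (Hpred : forall k, (Z.of_nat (S k) - 1)%Z = Z.of_nat k) by lia.
  assert (Hnum0 : forall z, qnum z (Z.of_nat 0) = 0) by (intro; unfold qnum; simpl; unfold Rdiv; ring).
  intros c1 c2; unfold qEHT_image_coef, c2, c1, qderiv_coef, qEHT_beta, qEHT_gamma, lam,
    lambda_n, qnat.
  destruct k as [|[|k]]; cbn [coef_mulX pred]; rewrite ?Hpred, ?Hnum0; field.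
Qed.

Lemma qEHT_peval (l : R) (c : nat -> R) (n : nat) (x : R) :
  (forall k, (n < k)%nat -> c k = 0) ->
  s / 2 * (x - a) * (x - b) * qD (/ q) (qD q (peval c n)) x
    + (t1 * x + t0) * qD q (peval c n) x + l * peval c n x
  = peval (qEHT_image_coef l c) n x.
Proof.
  intro Hc.
  pose proof (inv_gt_1 q hq).
  set (c1 := qderiv_coef q c); set (c2 := qderiv_coef (/ q) c1).
  assert (Hc1 : forall k, (n <= k)%nat -> c1 k = 0)
    by (intros; unfold c1, qderiv_coef; rewrite Hc; [ring | lia]).
  assert (Hc2 : forall k, (n <= S k)%nat -> c2 k = 0)
    by (intros; unfold c2, qderiv_coef; rewrite Hc1; [ring | lia]).
  assert (Hpad : forall t, peval c n t = peval c (S (S n)) t)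
    by (intro; rewrite !peval_pad; auto).
  assert (HD1 : forall t, qD q (peval c n) t = peval c1 n t).
  { intro t; rewrite (qD_ext _ _ _ _ Hpad), qD_peval by lra.
    now rewrite peval_pad by auto. }
  rewrite (qD_ext _ _ _ _ HD1), HD1.
  replace (qD (/ q) (peval c1 n) x) with (peval c2 n x).
  2:{ assert (Hpad1 : forall t, peval c1 n t = peval c1 (S n) t)
        by (intro; rewrite peval_pad; auto).
      now rewrite (qD_ext _ _ _ _ Hpad1), qD_peval by lra. }
  assert (HX2 : x * peval c2 n x = peval (coef_mulX c2) n x) by (apply peval_mulX; auto).
  assert (HXX2 : x * peval (coef_mulX c2) n x = peval (coef_mulX (coef_mulX c2)) n x)
    by (apply peval_mulX; destruct n; simpl; auto).
  assert (HX1 : x * peval c1 n x = peval (coef_mulX c1) n x) by (apply peval_mulX; auto).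
  assert (Hlin : forall N,
    peval (fun k => s / 2 * (coef_mulX (coef_mulX c2) k - (a + b) * coef_mulX c2 k + a * b * c2 k)
                    + t1 * coef_mulX c1 k + t0 * c1 k + l * c k) N x
    = s / 2 * (peval (coef_mulX (coef_mulX c2)) N x - (a + b) * peval (coef_mulX c2) N x
               + a * b * peval c2 N x)
      + t1 * peval (coef_mulX c1) N x + t0 * peval c1 N x + l * peval c N x).
  { intro N; induction N as [|N IHN]; [unfold peval; simpl; ring|].
    rewrite !(peval_S _ N), IHN; ring. }
  transitivity (s / 2 * (x * (x * peval c2 n x) - (a + b) * (x * peval c2 n x) + a * b * peval c2 n x)
                + t1 * (x * peval c1 n x) + t0 * peval c1 n x + l * peval c n x); [ring|].
  rewrite HX2, HXX2, HX1, <- Hlin.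
  unfold peval; apply sum_eq; intros k _; f_equal; apply qEHT_coef.
Qed.

(* [eigen_coef_pair n j] is (c (n - j), c (n - j + 1)) for the coefficients c of P_n:
   starting from c n = 1, each c k is solved from [qEHT_image_coef (lam n) c k = 0],
   which is possible because the eigenvalues are distinct. *)
Fixpoint eigen_coef_pair (n j : nat) : R * R :=
  match j with
  | 0%nat => (1, 0)
  | S j' =>
      let p := eigen_coef_pair n j' in
      (- (fst p * qEHT_beta (n - j') + snd p * qEHT_gamma (S (n - j')))
         / (lam n - lam (n - S j')), fst p)
  end.

Definition eigen_coef (n k : nat) : R := if Nat.leb k n then fst (eigen_coef_pair n (n - k)) else 0.

Definition eigen_poly (n : nat) : R -> R := peval (eigen_coef n) n.

Lemma eigen_coef_top (n : nat) : eigen_coef n n = 1.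
Proof. unfold eigen_coef; now rewrite Nat.leb_refl, Nat.sub_diag. Qed.

Lemma eigen_coef_above (n k : nat) : (n < k)%nat -> eigen_coef n k = 0.
Proof. intro H; unfold eigen_coef; destruct (Nat.leb_spec k n); [lia | reflexivity]. Qed.

Lemma eigen_coef_image (n k : nat) : (k <= n)%nat ->
  qEHT_image_coef (lam n) (eigen_coef n) k = 0.
Proof.
  intro Hk; unfold qEHT_image_coef.
  destruct (Nat.eq_dec k n) as [-> | Hne].
  { rewrite (eigen_coef_above n (S n)), (eigen_coef_above n (S (S n))) by lia; ring. }
  assert (E1 : eigen_coef n (S k) = fst (eigen_coef_pair n (n - S k))).
  { unfold eigen_coef; destruct (Nat.leb_spec (S k) n); [reflexivity | lia]. }
  assert (E2 : eigen_coef n (S (S k)) = snd (eigen_coef_pair n (n - S k))).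
  { destruct (Nat.eq_dec (S k) n) as [<- | Hne'].
    - rewrite eigen_coef_above, Nat.sub_diag by lia; reflexivity.
    - replace (n - S k)%nat with (S (n - S (S k))) by lia.
      unfold eigen_coef; destruct (Nat.leb_spec (S (S k)) n); [reflexivity | lia]. }
  assert (E0 : eigen_coef n k = fst (eigen_coef_pair n (S (n - S k)))).
  { unfold eigen_coef; destruct (Nat.leb_spec k n); [|lia]. do 3 f_equal; lia. }
  assert (Hlam : lam n - lam k <> 0).
  { intro He; apply Hne, (lambda_n_inj q s t1 hq h1 k n hs); unfold lam in He; lra. }
  rewrite E0, E1, E2; simpl.
  replace (n - (n - S k))%nat with (S k) by lia.
  replace (n - S (n - S k))%nat with k by lia.
  field; exact Hlam.
Qed.

Lemma eigen_poly_qEHT (n : nat) (x : R) :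
  s / 2 * (x - a) * (x - b) * qD (/ q) (qD q (eigen_poly n)) x
    + (t1 * x + t0) * qD q (eigen_poly n) x + lam n * eigen_poly n x = 0.
Proof.
  unfold eigen_poly; rewrite qEHT_peval by apply eigen_coef_above.
  apply peval_coef_0, eigen_coef_image.
Qed.

End EigenPolynomials.

Lemma is_series_telescoping (u W : nat -> R) (c L : R) : c <> 0 ->
  (forall j, c * u j = W j - W (S j)) -> is_lim_seq W L -> is_series u ((W 0%nat - L) / c).
Proof.
  intros Hc Hu HW.
  apply is_series_Reals, is_lim_seq_Reals.
  apply (is_lim_seq_ext (fun N => (W 0%nat - W (S N)) / c)).
  - intro N; apply (Rmult_eq_reg_l c); [|exact Hc].
    induction N as [|N IHN]; simpl.
    + rewrite Hu; field; exact Hc.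
    + rewrite Rmult_plus_distr_l, <- IHN, Hu; field; exact Hc.
  - apply is_lim_seq_div'; [|apply is_lim_seq_const | exact Hc].
    apply is_lim_seq_minus'; [apply is_lim_seq_const | now apply is_lim_seq_incr_1 in HW].
Qed.

Section Weight.

Variables (q a b : R).
Hypothesis hq : 0 < q < 1.
Hypothesis ha : a < 0.
Hypothesis hb : 0 < b.

Definition qweight (x : R) : R := qpoch_inf (q * x / a) q * qpoch_inf (q * x / b) q.

Lemma qweight_pearson (x : R) : qweight (/ q * x) = (1 - x / a) * (1 - x / b) * qweight x.
Proof.
  unfold qweight.
  replace (q * (/ q * x) / a) with (x / a) by (field; split; lra).
  replace (q * (/ q * x) / b) with (x / b) by (field; split; lra).
  rewrite (qpoch_inf_rec (x / a)), (qpoch_inf_rec (x / b)).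
  replace (x / a * q) with (q * x / a) by (field; lra).
  replace (x / b * q) with (q * x / b) by (field; lra).
  ring.
Qed.

Lemma qweight_cvg_1 (u : nat -> R) : is_lim_seq u 0 -> is_lim_seq (fun j => qweight (u j)) 1.
Proof.
  intro Hu; unfold qweight.
  assert (Hscal : forall c, is_lim_seq (fun j => q * u j / c) 0).
  { intro c; apply (is_lim_seq_ext (fun j => (q / c) * u j)); [intro; unfold Rdiv; ring|].
    replace (Finite 0) with (Rbar_mult (q / c) 0) by (simpl; f_equal; ring).
    now apply is_lim_seq_scal_l. }
  replace (Finite 1) with (Finite (1 * 1)) by (f_equal; ring).
  apply is_lim_seq_mult'; apply qpoch_inf_cvg_1; auto.
Qed.

Lemma endpoint_ratios (y : R) : y = a \/ y = b -> y / a <= 1 /\ y / b <= 1.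
Proof.
  assert (/ a < 0) by (apply Rinv_lt_0_compat; lra).
  assert (0 < / b) by (apply Rinv_0_lt_compat; lra).
  intros [-> | ->]; unfold Rdiv; rewrite ?Rinv_r by lra; split; nra.
Qed.

Lemma qweight_lattice_bounds (y : R) (j : nat) : y = a \/ y = b ->
  0 <= qweight (q ^ j * y) <= exp (Rabs (y / a) / (1 - q)) * exp (Rabs (y / b) / (1 - q)).
Proof.
  intro Hy; destruct (endpoint_ratios y Hy) as [Hya Hyb].
  pose proof (pow_unit_interval q (S j) ltac:(lra)) as Hp.
  assert (Hfactor : forall c, c <= 1 ->
            0 <= qpoch_inf (c * q ^ S j) q <= exp (Rabs c / (1 - q))).
  { intros c Hc.
    destruct (qpoch_inf_bounds q hq (c * q ^ S j)) as [H0 Hb];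
      [destruct (Rle_dec c 0); nra|].
    split; [exact H0|]; apply Rabs_le_between' in Hb.
    assert (exp (Rabs (c * q ^ S j) / (1 - q)) <= exp (Rabs c / (1 - q))); [|lra].
    apply exp_le_compat, Rmult_le_compat_r; [left; apply Rinv_0_lt_compat; lra|].
    rewrite Rabs_mult, (Rabs_right (q ^ S j)) by lra; pose proof (Rabs_pos c); nra. }
  unfold qweight.
  replace (q * (q ^ j * y) / a) with (y / a * q ^ S j) by (simpl; field; lra).
  replace (q * (q ^ j * y) / b) with (y / b * q ^ S j) by (simpl; field; lra).
  destruct (Hfactor _ Hya), (Hfactor _ Hyb).
  split; [apply Rmult_le_pos | apply Rmult_le_compat]; auto.
Qed.

Definition qwronskian (f g : R -> R) (x : R) : R :=
  qweight (/ q * x) * ((f (/ q * x) * g x - f x * g (/ q * x)) / x).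

Lemma qwronskian_endpoint (f g : R -> R) (y : R) : y = a \/ y = b -> qwronskian f g y = 0.
Proof.
  intro Hy; unfold qwronskian; rewrite qweight_pearson.
  destruct Hy as [-> | ->]; [replace (a / a) with 1 | replace (b / b) with 1];
    try ring; field; lra.
Qed.

Lemma qwronskian_lattice_cvg (c d : nat -> R) (n m : nat) (y : R) :
  c (S n) = 0 -> d (S m) = 0 -> y <> 0 ->
  is_lim_seq (fun N => qwronskian (peval c n) (peval d m) (q ^ N * y))
    ((1 - q) / q * (qderiv_coef q c 0 * d 0%nat - c 0%nat * qderiv_coef q d 0)).
Proof.
  intros Hc Hd Hy.
  assert (Hgeom : is_lim_seq (fun N => q ^ N * y) 0)
    by (apply is_lim_seq_geom_scal; rewrite Rabs_right; lra).
  assert (Hgeom' : is_lim_seq (fun N => / q * (q ^ N * y)) 0).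
  { apply (is_lim_seq_ext (fun N => q ^ N * (/ q * y))); [intro; ring|].
    apply is_lim_seq_geom_scal; rewrite Rabs_right; lra. }
  (* f (x / q) - f x = (1 - q) (x / q) D_q f (x / q) turns the quotient by x into q-derivatives *)
  apply (is_lim_seq_ext (fun N => qweight (/ q * (q ^ N * y)) *
     ((1 - q) / q * (peval (qderiv_coef q c) n (/ q * (q ^ N * y)) * peval d m (q ^ N * y)
        - peval c n (q ^ N * y) * peval (qderiv_coef q d) m (/ q * (q ^ N * y)))))).
  - intro N; unfold qwronskian; f_equal.
    assert (Hx : q ^ N * y <> 0)
      by (apply Rmult_integral_contrapositive; split; [apply pow_nonzero; lra | exact Hy]).
    set (x := q ^ N * y) in *.
    pose proof (peval_qdiff q c n (/ q * x) ltac:(lra)) as Ec.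
    pose proof (peval_qdiff q d m (/ q * x) ltac:(lra)) as Ed.
    rewrite !peval_pad in Ec, Ed by assumption.
    replace (q * (/ q * x)) with x in Ec, Ed by (field; lra).
    replace (peval c n (/ q * x)) with
      (peval c n x + (1 - q) * (/ q * x) * peval (qderiv_coef q c) n (/ q * x)) by lra.
    replace (peval d m (/ q * x)) with
      (peval d m x + (1 - q) * (/ q * x) * peval (qderiv_coef q d) m (/ q * x)) by lra.
    field; split; [lra | exact Hx].
  - replace (Finite _) with (Finite (1 * ((1 - q) / q * (qderiv_coef q c 0 * d 0%nat
                                 - c 0%nat * qderiv_coef q d 0)))) by (f_equal; ring).
    apply is_lim_seq_mult'; [now apply qweight_cvg_1|].
    apply is_lim_seq_mult'; [apply is_lim_seq_const|].
    apply is_lim_seq_minus'; apply is_lim_seq_mult'; now apply peval_cvg_at_0.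
Qed.

Lemma ex_series_lattice (c d : nat -> R) (n m : nat) (y : R) : y = a \/ y = b ->
  ex_series (fun j => q ^ j * (peval c n (q ^ j * y) * peval d m (q ^ j * y) * qweight (q ^ j * y))).
Proof.
  intro Hy.
  set (B := exp (Rabs (y / a) / (1 - q)) * exp (Rabs (y / b) / (1 - q))).
  set (Mc := peval (fun k => Rabs (c k)) n (Rabs y)).
  set (Md := peval (fun k => Rabs (d k)) m (Rabs y)).
  apply (@ex_series_le R_AbsRing R_CompleteNormedModule _ (fun j => (Mc * Md * B) * q ^ j)).
  - intro j; change (norm ?z) with (Rabs z).
    assert (0 <= q ^ j) by (apply pow_le; lra).
    assert (Hx : Rabs (q ^ j * y) <= Rabs y).
    { rewrite Rabs_mult, (Rabs_right (q ^ j)) by lra.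
      pose proof (pow_unit_interval q j ltac:(lra)); pose proof (Rabs_pos y); nra. }
    pose proof (peval_abs_le c n _ _ Hx) as Bc; pose proof (peval_abs_le d m _ _ Hx) as Bd.
    fold Mc in Bc; fold Md in Bd.
    destruct (qweight_lattice_bounds y j Hy) as [R0 R1]; fold B in R1.
    rewrite !Rabs_mult, (Rabs_right (q ^ j)), (Rabs_right (qweight _)) by lra.
    assert (Rabs (peval c n (q ^ j * y)) * Rabs (peval d m (q ^ j * y)) <= Mc * Md)
      by (apply Rmult_le_compat; auto using Rabs_pos).
    assert (Rabs (peval c n (q ^ j * y)) * Rabs (peval d m (q ^ j * y)) * qweight (q ^ j * y)
            <= Mc * Md * B)
      by (apply Rmult_le_compat; auto; apply Rmult_le_pos; apply Rabs_pos).
    nra.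
  - apply (ex_series_ext (fun j => scal (Mc * Md * B) (q ^ j))); [reflexivity|].
    apply (@ex_series_scal_l R_AbsRing R_NormedModule), ex_series_geom.
    rewrite Rabs_right; lra.
Qed.

Lemma qint_peval_sq_pos (c : nat -> R) (n : nat) : c n <> 0 ->
  0 < qint q a b (fun x => peval c n x * peval c n x * qweight x).
Proof.
  intro Hc; unfold qint.
  set (u := fun y j => q ^ j * (peval c n (q ^ j * y) * peval c n (q ^ j * y) * qweight (q ^ j * y))).
  assert (Hex : forall y, y = a \/ y = b -> ex_series (u y)) by (intros; now apply ex_series_lattice).
  assert (Hnn : forall y j, y = a \/ y = b -> 0 <= u y j).
  { intros y j Hy; destruct (qweight_lattice_bounds y j Hy).
    apply Rmult_le_pos; [apply pow_le; lra | apply Rmult_le_pos; [apply Rle_0_sqr | assumption]]. }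
  assert (Hweight : exists J, forall j, (J <= j)%nat -> / 2 < qweight (q ^ j * b)).
  { pose proof (qweight_cvg_1 _ (is_lim_seq_geom_scal q b ltac:(rewrite Rabs_right; lra)))
      as Hl; apply is_lim_seq_spec in Hl.
    destruct (Hl (mkposreal (/ 2) ltac:(lra))) as [J HJ]; exists J.
    intros j Hj; specialize (HJ j Hj); apply Rabs_lt_between in HJ; simpl in HJ; lra. }
  destruct Hweight as [J HJ].
  assert (Hj0 : exists j, (J <= j)%nat /\ peval c n (q ^ j * b) <> 0).
  { apply NNPP; intro Hnone; apply Hc, (peval_eventually_zero c n q b J hq ltac:(lra)).
    intros j Hj; apply NNPP; intro Hnz; apply Hnone; now exists j. }
  destruct Hj0 as [j0 [HJj0 Hnz]].
  assert (Hpos : 0 < u b j0).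
  { unfold u; specialize (HJ j0 HJj0).
    apply Rmult_lt_0_compat; [apply pow_lt; lra|].
    apply Rmult_lt_0_compat; [apply Rsqr_pos_lt; exact Hnz | lra]. }
  assert (Sa : 0 <= Series (u a)).
  { eapply Rle_trans; [apply (Hnn a 0%nat); auto | apply Series_ge_term; auto]. }
  assert (Sb : 0 < Series (u b)).
  { eapply Rlt_le_trans; [exact Hpos | apply Series_ge_term; auto]. }
  change (0 < (1 - q) * b * Series (u b) + (1 - q) * - a * Series (u a)).
  assert (0 < (1 - q) * b * Series (u b))
    by (apply Rmult_lt_0_compat; [apply Rmult_lt_0_compat|]; lra).
  assert (0 <= (1 - q) * - a * Series (u a))
    by (apply Rmult_le_pos; [apply Rmult_le_pos|]; lra).
  lra.
Qed.

End Weight.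

Section Orthogonality.

Variables (q s t1 t0 a b : R).
Hypothesis hq : 0 < q < 1.
Hypothesis hs : s <> 0.
Hypothesis ha : a < 0.
Hypothesis hb : 0 < b.
Hypothesis h1 : (1 - / q) * t1 = - (s / 2).
Hypothesis h0 : (1 - / q) * t0 = s / 2 * (a + b).

Let lam := lambda_n q t1 s.
Let P := eigen_poly q s t1 t0 a b.
(* K = q sigma2 / (1 - q), where sigma2 = q s a b / 2 is constant under the hypotheses. *)
Let K := q ^ 2 * s * a * b / (2 * (1 - q)).

Lemma green_const_neq0 : K <> 0.
Proof.
  assert (q ^ 2 <> 0) by (apply pow_nonzero; lra).
  unfold K, Rdiv; apply Rmult_integral_contrapositive_currified;
    [|apply Rinv_neq_0_compat, Rmult_integral_contrapositive_currified; lra].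
  repeat apply Rmult_integral_contrapositive_currified; auto; lra.
Qed.

(* Discrete Green identity at a lattice point x, in terms of the values
   F0, F1, F2 = f (q x), f x, f (x / q) of an eigenfunction f for [ln], likewise G for [lm],
   and r = qweight x, so that (1 - x/a)(1 - x/b) r = qweight (x / q). *)
Lemma green_identity (x F0 F1 F2 G0 G1 G2 r ln lm : R) : x <> 0 ->
  s / 2 * (x - a) * (x - b) * (((F1 - F0) / ((1 - q) * x) - (F2 - F1) / ((1 - q) * (/ q * x)))
    / ((1 - / q) * x)) + (t1 * x + t0) * ((F1 - F0) / ((1 - q) * x)) + ln * F1 = 0 ->
  s / 2 * (x - a) * (x - b) * (((G1 - G0) / ((1 - q) * x) - (G2 - G1) / ((1 - q) * (/ q * x)))
    / ((1 - / q) * x)) + (t1 * x + t0) * ((G1 - G0) / ((1 - q) * x)) + lm * G1 = 0 ->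
  ((1 - x / a) * (1 - x / b) * r * ((F2 * G1 - F1 * G2) / x) - r * ((F1 * G0 - F0 * G1) / (q * x)))
    / ((1 - q) * x) * K
  = (lm - ln) * (F1 * G1 * r).
Proof.
  intros hx Ef Eg.
  pose proof (inv_gt_1 q hq).
  assert (Ht1 : t1 = - (s / 2) / (1 - / q)) by (rewrite <- h1; field; lra).
  assert (Ht0 : t0 = s / 2 * (a + b) / (1 - / q)) by (rewrite <- h0; field; lra).
  revert Ef Eg.
  set (LF := s / 2 * (x - a) * (x - b) * (((F1 - F0) / ((1 - q) * x)
             - (F2 - F1) / ((1 - q) * (/ q * x))) / ((1 - / q) * x))
             + (t1 * x + t0) * ((F1 - F0) / ((1 - q) * x))).
  set (LG := s / 2 * (x - a) * (x - b) * (((G1 - G0) / ((1 - q) * x)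
             - (G2 - G1) / ((1 - q) * (/ q * x))) / ((1 - / q) * x))
             + (t1 * x + t0) * ((G1 - G0) / ((1 - q) * x))).
  intros Ef Eg.
  transitivity (r * (LF * G1 - F1 * LG)).
  - unfold LF, LG, K; rewrite Ht1, Ht0; field; repeat split; lra.
  - replace LF with (- ln * F1) by lra; replace LG with (- lm * G1) by lra; ring.
Qed.

Lemma qwronskian_step (n m : nat) (y : R) (j : nat) : y <> 0 ->
  (1 - q) * y * (q ^ j * (P n (q ^ j * y) * P m (q ^ j * y) * qweight q a b (q ^ j * y)))
    * ((lam m - lam n) / K)
  = qwronskian q a b (P n) (P m) (q ^ j * y) - qwronskian q a b (P n) (P m) (q ^ S j * y).
Proof.
  intro hy.
  assert (Hx : q ^ j * y <> 0)
    by (apply Rmult_integral_contrapositive; split; [apply pow_nonzero; lra | exact hy]).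
  set (x := q ^ j * y) in *.
  replace (q ^ S j * y) with (q * x) by (unfold x; simpl; ring).
  pose proof (eigen_poly_qEHT q s t1 t0 a b hq hs h1 n x) as Ef.
  pose proof (eigen_poly_qEHT q s t1 t0 a b hq hs h1 m x) as Eg.
  fold P lam in Ef, Eg.
  rewrite qD2_neq0, qD_neq0 in Ef, Eg by lra.
  pose proof (green_identity x _ _ _ _ _ _ (qweight q a b x) (lam n) (lam m) Hx Ef Eg) as HG.
  unfold qwronskian; replace (/ q * (q * x)) with x by (field; lra).
  rewrite qweight_pearson by lra.
  pose proof green_const_neq0.
  transitivity ((lam m - lam n) * (P n x * P m x * qweight q a b x) * ((1 - q) * x) / K).
  { unfold x; field; repeat split; auto; lra. }
  rewrite <- HG; field; repeat split; auto; lra.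
Qed.

Lemma qint_eigen_orth (n m : nat) : m <> n ->
  qint q a b (fun x => P n x * P m x * qweight q a b x) = 0.
Proof.
  intro Hmn.
  set (cc := (lam m - lam n) / K).
  assert (Hcc : cc <> 0).
  { pose proof green_const_neq0; unfold cc, Rdiv; apply Rmult_integral_contrapositive_currified;
      [|now apply Rinv_neq_0_compat].
    intro E; apply Hmn, (lambda_n_inj q s t1 hq h1 m n hs); unfold lam in E; lra. }
  set (L := (1 - q) / q * (qderiv_coef q (eigen_coef q s t1 t0 a b n) 0 * eigen_coef q s t1 t0 a b m 0%nat
             - eigen_coef q s t1 t0 a b n 0%nat * qderiv_coef q (eigen_coef q s t1 t0 a b m) 0)).
  assert (Hs : forall y, y = a \/ y = b ->
     Series (fun j => q ^ j * (P n (q ^ j * y) * P m (q ^ j * y) * qweight q a b (q ^ j * y)))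
     = (0 - L) / ((1 - q) * y * cc)).
  { intros y Hy; assert (y <> 0) by (destruct Hy; lra).
    apply is_series_unique.
    replace (0 - L) with (qwronskian q a b (P n) (P m) (q ^ 0 * y) - L)
      by (rewrite pow_O, Rmult_1_l, qwronskian_endpoint; auto).
    apply (is_series_telescoping _ (fun j => qwronskian q a b (P n) (P m) (q ^ j * y)));
      [apply Rmult_integral_contrapositive_currified;
         [apply Rmult_integral_contrapositive_currified; [lra | assumption] | exact Hcc] | |].
    - intro j; rewrite <- qwronskian_step by assumption; fold cc; ring.
    - apply qwronskian_lattice_cvg; auto; apply eigen_coef_above; lia. }
  unfold qint; rewrite (Hs a (or_introl eq_refl)), (Hs b (or_intror eq_refl)).
  field; repeat split; auto; lra.
Qed.

End Orthogonality.

Theorem theorem5p12 (q s t1 t0 a b : R)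
  (hq0 : 0 < q) (hq1 : q < 1)
  (hs : s <> 0) (ht1 : t1 <> 0)
  (ha : a < 0) (hb : 0 < b)
  (h1 : (1 - / q) * t1 = - (s / 2))
  (h0 : (1 - / q) * t0 = s / 2 * (a + b)) :
  let sigma1 := fun x : R => s / 2 * (x - a) * (x - b) in
  let tau := fun x : R => t1 * x + t0 in
  let rho := fun x : R => qpoch_inf (q * x / a) q * qpoch_inf (q * x / b) q in
  exists (P : nat -> R -> R) (d2 : nat -> R),
    (forall n : nat,
        is_poly_deg (P n) n /\
        solves_qEHT q sigma1 tau (lambda_n q t1 s n) (P n) /\
        d2 n <> 0) /\
    (forall m n : nat,
        qintegrable q a b (fun x => P n x * P m x * rho x) /\
        qint q a b (fun x => P n x * P m x * rho x) = (if Nat.eqb m n then d2 n else 0)).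
Proof.
  intros sigma1 tau rho.
  assert (hq : 0 < q < 1) by lra.
  set (P := eigen_poly q s t1 t0 a b).
  change rho with (qweight q a b).
  exists P, (fun n => qint q a b (fun x => P n x * P n x * qweight q a b x)).
  split.
  - intro n; split; [|split].
    + exists (eigen_coef q s t1 t0 a b n); split; [rewrite eigen_coef_top; lra | reflexivity].
    + intro x; apply eigen_poly_qEHT; assumption.
    + apply Rgt_not_eq, qint_peval_sq_pos; auto.
      rewrite eigen_coef_top; lra.
  - intros m n; split.
    + split; apply ex_series_lattice; auto.
    + destruct (Nat.eqb_spec m n) as [-> | Hmn]; [reflexivity|].
      now apply qint_eigen_orth.
Qed.
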